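(* For $\delta, \rho \in (0,1/4)$, there exist $\nu, \nu' > 0$ depending only on $\delta,\rho$, and a finite set $\mathcal{K}$ of positive real numbers depending only on $\delta,\rho$, such that for every $n\ge 1$ and every $x \in \mathbb{S}^{n-1} \setminus \operatorname{Cons}(\delta,\rho)$, at least one of the following holds: (1) there exist $\kappa,\kappa' \in \mathcal{K}$ such that $|x_i| \le \kappa/\sqrt{n}$ for at least $\nu n$ indices $i \in [n]$, and $(\kappa+\nu')/\sqrt{n} < |x_i| \le \kappa'/\sqrt{n}$ for at least $\nu n$ indices $i\in[n]$; (2) there exist $\kappa,\kappa' \in \mathcal{K}$ such that $\kappa/\sqrt{n} < x_i < \kappa'/\sqrt{n}$ for at least $\nu n$ indices $i \in [n]$, and $-\kappa'/\sqrt{n} < x_i < -\kappa/\sqrt{n}$ for at least $\nu n$ indices $i\in[n]$.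
   Context: $\mathbb{S}^{n-1}$ is the Euclidean unit sphere in $\mathbb{R}^n$ and $[n]=\{1,\dots,n\}$. For $\delta,\rho\in(0,1)$, $\operatorname{Cons}(\delta,\rho)$ is the set of $x \in \mathbb{S}^{n-1}$ for which there exists $\lambda \in \mathbb{R}$ with $|x_i - \lambda| \le \rho/\sqrt{n}$ for at least $(1-\delta)n$ indices $i\in[n]$. *)

From mathcomp Require Import all_boot all_order all_algebra.
From mathcomp Require Import reals.
Set Implicit Arguments. Unset Strict Implicit. Unset Printing Implicit Defensive.
Import Order.TTheory GRing.Theory Num.Theory.
Local Open Scope ring_scope.

Definition on_sphere {R : realType} {n : nat} (x : 'I_n -> R) : Prop :=
  \sum_(i < n) x i ^+ 2 = 1.

Definition cnt {R : realType} {n : nat} (P : pred 'I_n) : R :=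
  (#|[set i | P i]|)%:R.

Definition Cons_set {R : realType} (delta rho : R) {n : nat} (x : 'I_n -> R) : Prop :=
  on_sphere x /\
  exists lambda : R,
    (1 - delta) * n%:R <= cnt (fun i => `|x i - lambda| <= rho / Num.sqrt n%:R).

From mathcomp Require Import all_boot all_order all_algebra.
From mathcomp Require Import reals ring lra.
Import Order.TTheory GRing.Theory Num.Theory.
Local Open Scope ring_scope.

(* Work in units c = (rho/2)/sqrt n and let j >= 1 be the first level with
   |x_i| <= j c for at least (delta/4) n indices.  Chebyshev on the sphere puts
   all but (delta/4) n coordinates below a level N depending only on delta and
   rho, so j <= N.  Either (delta/4) n coordinates lie between levels j + 1 and
   N, which is (1), or more than (1 - 3 delta/4) n lie in the shell between
   levels j - 1 and j + 1.  The positive and negative halves of that shell each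
   fit in a ball of radius rho/sqrt n, which holds fewer than (1 - delta) n
   coordinates because x is not in Cons(delta, rho); hence each half holds at
   least (delta/4) n of them, which is (2).  For j = 1 the shell lies in a
   single ball around 0, a contradiction. *)

Lemma cnt_sub {R : realType} {n : nat} (P Q : pred 'I_n) :
  subpred P Q -> cnt P <= cnt Q :> R.
Proof.
move=> PQ; rewrite /cnt ler_nat; apply: subset_leq_card; apply/subsetP => i.
by rewrite !inE; apply: PQ.
Qed.

Lemma cnt_cover {R : realType} {n : nat} (P Q S : pred 'I_n) :
  (forall i, P i -> Q i || S i) -> cnt P <= cnt Q + cnt S :> R.
Proof.
move=> PQS; rewrite /cnt -natrD ler_nat.
apply: leq_trans (leq_card_setU _ _); apply: subset_leq_card.
by apply/subsetP => i; rewrite !inE; apply: PQS.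
Qed.

Lemma cnt_predC {R : realType} {n : nat} (P : pred 'I_n) :
  cnt P + cnt (predC P) = n%:R :> R.
Proof.
rewrite /cnt -natrD; congr (_%:R).
have -> : [set i | predC P i] = ~: [set i | P i] by apply/setP => i; rewrite !inE.
by rewrite cardsC card_ord.
Qed.

Lemma cnt_gt_mul_sqr_le {R : realType} {n : nat} (x : 'I_n -> R) (t : R) :
  0 <= t -> cnt (fun i => t < `|x i|) * t ^+ 2 <= \sum_(i < n) x i ^+ 2.
Proof.
move=> t_ge0; rewrite /cnt mulr_natl -sumr_const big_mkcond /=.
apply: ler_sum => i _; rewrite inE; case: ifP => [t_lt_xi|_]; last exact: sqr_ge0.
by rewrite -[x i ^+ 2]real_normK ?num_real // !expr2 ler_pM // ltW.
Qed.

Lemma sphere_tail_cnt {R : realType} {n : nat} {x : 'I_n -> R} {M : R} :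
  (0 < n)%N -> 0 < M -> on_sphere x ->
  cnt (fun i => M / Num.sqrt n%:R < `|x i|) <= n%:R / M ^+ 2.
Proof.
move=> n_gt0 M_gt0 x_sphere; set s := Num.sqrt n%:R.
have s_gt0 : 0 < s by rewrite sqrtr_gt0 ltr0n.
have M_sqrE : M ^+ 2 = (M / s) ^+ 2 * s ^+ 2 by rewrite -exprMn divfK ?lt0r_neq0.
rewrite ler_pdivlMr ?exprn_gt0 // -[n%:R](@sqr_sqrtr R) ?ler0n // -/s.
rewrite M_sqrE mulrA ler_piMl ?sqr_ge0 // -x_sphere.
by rewrite cnt_gt_mul_sqr_le ?divr_ge0 ?ltW.
Qed.

Lemma sphere_bulk_cnt {R : realType} {n : nat} (x : 'I_n -> R) (delta L : R) :
  (0 < n)%N -> 0 < delta <= 1 -> 2 / delta <= L -> on_sphere x ->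
  (1 - delta / 4) * n%:R <= cnt (fun i => `|x i| <= L / Num.sqrt n%:R).
Proof.
move=> n_gt0 /andP[delta_gt0 delta_le1] L_large x_sphere.
set M := 2 / delta; set s := Num.sqrt n%:R.
have M_gt0 : 0 < M by rewrite divr_gt0.
have tail_le : n%:R / M ^+ 2 <= delta / 4 * n%:R.
  have -> : n%:R / M ^+ 2 = delta ^+ 2 / 4 * n%:R by rewrite /M; field; rewrite lt0r_neq0.
  by rewrite ler_wpM2r ?ler0n // expr2; nra.
have := sphere_tail_cnt n_gt0 M_gt0 x_sphere; rewrite -/s => tail.
have := cnt_predC (R := R) (fun i => M / s < `|x i|).
have : cnt (predC (fun i => M / s < `|x i|)) <= cnt (fun i => `|x i| <= L / s) :> R.
  apply: cnt_sub => i /=; rewrite -leNgt => /le_trans; apply.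
  by rewrite ler_pM2r ?invr_gt0 ?sqrtr_gt0 ?ltr0n.
lra.
Qed.

Lemma not_Cons_ball_cnt {R : realType} (delta rho : R) {n : nat} (x : 'I_n -> R) :
  on_sphere x -> ~ Cons_set delta rho x ->
  forall lambda, cnt (fun i => `|x i - lambda| <= rho / Num.sqrt n%:R)
                 < (1 - delta) * n%:R.
Proof.
move=> x_sphere x_notCons lambda; rewrite ltNge; apply/negP => x_cons.
by apply: x_notCons; split; last exists lambda.
Qed.

Section Levels.

Context {R : realType} {n : nat} {x : 'I_n -> R} {c delta : R}.
Hypothesis ball_cnt_lt :
  forall lambda, cnt (fun i => `|x i - lambda| <= 2 * c) < (1 - delta) * n%:R.

Local Notation level j := (cnt (fun i => `|x i| <= j%:R * c) : R).

Lemma level_cover (j k : nat) :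
  level k <= level j + cnt (fun i => (j%:R * c < `|x i|) && (`|x i| <= k%:R * c)).
Proof.
apply: cnt_cover => i xi_le_k; rewrite xi_le_k andbT ltNge.
exact: orbN.
Qed.

Lemma shell_two_sided (a : R) :
  (1 - 3 * delta / 4) * n%:R <= cnt (fun i => (a < `|x i|) && (`|x i| <= a + 2 * c)) ->
  delta / 4 * n%:R <= cnt (fun i => (a < x i) && (x i < a + 3 * c)) /\
  delta / 4 * n%:R <= cnt (fun i => (- (a + 3 * c) < x i) && (x i < - a)).
Proof.
move=> shell_large.
have shell_le : cnt (fun i => (a < `|x i|) && (`|x i| <= a + 2 * c))
                <= cnt (fun i => (a < x i) && (x i < a + 3 * c))
                   + cnt (fun i => (- (a + 3 * c) < x i) && (x i < - a)) :> R.
  apply: cnt_cover => i /andP[].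
  case: (lerP 0 (x i)) => [/ger0_norm|/ltr0_norm] -> lo hi.
    by apply/orP; left; apply/andP; split; lra.
  by apply/orP; right; apply/andP; split; lra.
have pos_le : cnt (fun i => (a < x i) && (x i < a + 3 * c))
              <= cnt (fun i => `|x i - (a + c)| <= 2 * c) :> R.
  by apply: cnt_sub => i /andP[lo hi]; rewrite ler_norml; apply/andP; split; lra.
have neg_le : cnt (fun i => (- (a + 3 * c) < x i) && (x i < - a))
              <= cnt (fun i => `|x i - - (a + c)| <= 2 * c) :> R.
  by apply: cnt_sub => i /andP[lo hi]; rewrite ler_norml; apply/andP; split; lra.
have := ball_cnt_lt (a + c); have := ball_cnt_lt (- (a + c)).
split; lra.
Qed.

Lemma level_dichotomy (N : nat) :
  0 < delta <= 1 -> (0 < N)%N -> (1 - delta / 4) * n%:R <= level N ->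
  (exists2 j, (0 < j <= N)%N &
     delta / 4 * n%:R <= level j /\
     delta / 4 * n%:R <= cnt (fun i => (j.+1%:R * c < `|x i|) && (`|x i| <= N%:R * c)))
  \/
  (exists2 j, (0 < j <= N)%N &
     delta / 4 * n%:R <= cnt (fun i => (j%:R * c < x i) && (x i < j.+3%:R * c)) /\
     delta / 4 * n%:R <= cnt (fun i => (- (j.+3%:R * c) < x i) && (x i < - (j%:R * c)))).
Proof.
move=> /andP[delta_gt0 delta_le1] N_gt0 level_N.
have n_ge0 : 0 <= n%:R :> R by rewrite ler0n.
have delta_n_ge0 : 0 <= delta * n%:R by rewrite mulr_ge0 // ltW.
pose crossing j := (0 < j)%N && (delta / 4 * n%:R <= level j).
have crossing_N : crossing N.
  by rewrite /crossing N_gt0 /=; apply: le_trans level_N; rewrite ler_wpM2r //; lra.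
have [j /andP[j_gt0 level_j] j_min] := ex_minnP (ex_intro crossing N crossing_N).
have j_le_N : (j <= N)%N := j_min N crossing_N.
have [outer_large|outer_small] :=
  lerP (delta / 4 * n%:R)
       (cnt (fun i => (j.+1%:R * c < `|x i|) && (`|x i| <= N%:R * c))).
  by left; exists j; rewrite ?j_gt0.
have level_succ : (1 - delta / 2) * n%:R < level j.+1.
  by have := level_cover j.+1 N; lra.
case: j => [//|[|k]] in j_gt0 level_j j_min j_le_N outer_small level_succ *.
  have : level 2 <= cnt (fun i => `|x i - 0| <= 2 * c) by apply: cnt_sub => i; rewrite subr0.
  by have := ball_cnt_lt 0; lra.
have level_k1 : level k.+1 < delta / 4 * n%:R.
  rewrite ltNge; apply/negP => level_k1.
  have /j_min : crossing k.+1 by rewrite /crossing level_k1.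
  by rewrite ltnn.
have shellE m : k.+1%:R * c + m%:R * c = (k.+1 + m)%:R * c by rewrite natrD mulrDl.
right; exists k.+1; first by rewrite /= ltnW.
rewrite -(addn3 k.+1) -shellE; apply: shell_two_sided.
by rewrite shellE addn2; have := level_cover k.+1 k.+3; lra.
Qed.

End Levels.

Theorem lemma2p3 (R : realType) (delta rho : R) :
  0 < delta < 1/4 -> 0 < rho < 1/4 ->
  exists (nu nu' : R) (K : seq R),
    [/\ 0 < nu, 0 < nu', (forall k, k \in K -> 0 < k) &
    forall (n : nat) (x : 'I_n -> R),
      (1 <= n)%N -> on_sphere x -> ~ Cons_set delta rho x ->
      (exists2 kappa, kappa \in K & exists2 kappa', kappa' \in K &
         nu * n%:R <= cnt (fun i => `|x i| <= kappa / Num.sqrt n%:R) /\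
         nu * n%:R <= cnt (fun i => ((kappa + nu') / Num.sqrt n%:R < `|x i|)
                                    && (`|x i| <= kappa' / Num.sqrt n%:R)))
      \/
      (exists2 kappa, kappa \in K & exists2 kappa', kappa' \in K &
         nu * n%:R <= cnt (fun i => (kappa / Num.sqrt n%:R < x i)
                                    && (x i < kappa' / Num.sqrt n%:R)) /\
         nu * n%:R <= cnt (fun i => (- (kappa' / Num.sqrt n%:R) < x i)
                                    && (x i < - (kappa / Num.sqrt n%:R))))].
Proof.
move=> /andP[delta_gt0 delta_lt] /andP[rho_gt0 _].
have delta_range : 0 < delta <= 1 by rewrite delta_gt0; lra.
set h := rho / 2; set N := (Num.truncn (2 / delta / h)).+1.
have h_gt0 : 0 < h by rewrite divr_gt0.
have N_large : 2 / delta <= N%:R * h by rewrite -ler_pdivrMr // ltW // truncnS_gt.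
set K := [seq j%:R * h | j <- iota 1 N.+3].
have mem_K j : (0 < j <= N.+3)%N -> j%:R * h \in K.
  by move=> /andP[j_gt0 j_le]; apply/mapP; exists j; rewrite // mem_iota j_gt0 add1n ltnS.
exists (delta / 4), h, K; split => //.
- by rewrite divr_gt0.
- by move=> k /mapP[j]; rewrite mem_iota => /andP[j_gt0 _] ->; rewrite mulr_gt0 ?ltr0n.
move=> n x n_gt0 x_sphere x_notCons; set s := Num.sqrt n%:R.
have ball_lt lambda : cnt (fun i => `|x i - lambda| <= 2 * (h / s)) < (1 - delta) * n%:R.
  have -> : 2 * (h / s) = rho / s by rewrite /h mulrA mulrCA divff ?mulr1 ?pnatr_eq0.
  exact: not_Cons_ball_cnt.
have level_N : (1 - delta / 4) * n%:R <= cnt (fun i => `|x i| <= N%:R * (h / s)).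
  by rewrite mulrA; apply: sphere_bulk_cnt.
have [[j /andP[j_gt0 j_le_N] counts]|[j /andP[j_gt0 j_le_N] counts]] :=
  level_dichotomy ball_lt N delta_range isT level_N.
- left; exists (j%:R * h); first by apply: mem_K; rewrite j_gt0 (leq_trans j_le_N (leq_addl 3 N)).
  exists (N%:R * h); first by apply: mem_K; rewrite /= (leq_addl 3 N).
  have -> : j%:R * h + h = j.+1%:R * h by rewrite -natr1 mulrDl mul1r.
  by rewrite -!(mulrA _ h).
- right; exists (j%:R * h); first by apply: mem_K; rewrite j_gt0 (leq_trans j_le_N (leq_addl 3 N)).
  exists (j.+3%:R * h); first by apply: mem_K; rewrite !ltnS.
  by rewrite -!(mulrA _ h).
Qed.
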